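(* Let $S$ be a finite semigroup satisfying the quasi-identities $$\forall a\,\forall b\,\forall \alpha\,\forall\beta\ \big((a\alpha=a\beta)\to(b\alpha=b\beta)\big),\qquad \forall a\,\forall b\,\forall \alpha\,\forall\beta\ \big((\alpha a=\beta a)\to(\alpha b=\beta b)\big).$$ Then $\mathrm{Ker}(S)=\mathrm{Red}(S)$, i.e. the kernel of $S$ is exactly the set of reducible elements of $S$.
   Context: The kernel $\mathrm{Ker}(S)$ of a finite semigroup $S$ is its (unique) minimal two-sided ideal. An element $s\in S$ is reducible if $s=ab$ for some $a,b\in S$; $\mathrm{Red}(S)$ is the set of reducible elements. *)

From mathcomp Require Import all_boot.
Set Implicit Arguments. Unset Strict Implicit. Unset Printing Implicit Defensive.

Definition associative_op (T : Type) (op : T -> T -> T) :=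
  forall x y z, op x (op y z) = op (op x y) z.

Definition is_ideal (T : finType) (op : T -> T -> T) (I : {set T}) :=
  I != set0 /\ (forall s x, x \in I -> op s x \in I) /\
  (forall s x, x \in I -> op x s \in I).

Definition is_kernel (T : finType) (op : T -> T -> T) (K : {set T}) :=
  is_ideal op K /\ (forall J, is_ideal op J -> J \subset K -> J = K).

Definition Red (T : finType) (op : T -> T -> T) : {set T} :=
  [set s | [exists a, exists b, op a b == s]].

From mathcomp Require Import all_boot.

Set Implicit Arguments.
Unset Strict Implicit.
Unset Printing Implicit Defensive.

(* Every ideal J contains Red: for j in J, finiteness gives powers c, e of j
   with c e = e, hence a c e = a e, and the right quasi-identity turns this
   into a c b = a b; so every product a b = a c b lies in J because c does. *)

Lemma least_ideal_is_kernel (T : finType) (op : T -> T -> T) (I : {set T}) :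
  is_ideal op I -> (forall J, is_ideal op J -> I \subset J) ->
  is_kernel op I /\ (forall K, is_kernel op K -> K = I).
Proof.
move=> idI leastI; split.
  by split=> // J idJ sJI; apply/eqP; rewrite eqEsubset sJI leastI.
by move=> K [idK minK]; apply/esym/minK; rewrite ?leastI.
Qed.

Section FiniteSemigroup.

Variables (T : finType) (op : T -> T -> T).
Hypothesis assoc : associative_op op.

(* [iter n (op j) j] is the power j^(n+1). *)
Lemma iter_op_mul j n x : iter n.+1 (op j) x = op (iter n (op j) j) x.
Proof. by elim: n x => [|n IHn] x //=; rewrite -/(iter n.+1 _ x) IHn assoc. Qed.

Lemma iter_op_in_ideal (J : {set T}) j n :
  is_ideal op J -> j \in J -> iter n (op j) j \in J.
Proof. by move=> [_ [mulJ _]] jJ; elim: n => //= n; apply: mulJ. Qed.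

Lemma power_absorbs_power j :
  exists d m, op (iter d (op j) j) (iter m (op j) j) = iter m (op j) j.
Proof.
pose f (i : 'I_#|T|.+1) := iter i (op j) j.
have /injectivePn [x [y neq_xy eq_fxy]] : ~~ injectiveb f.
  by apply/injectiveP => /leq_card; rewrite card_ord ltnn.
wlog lt_xy : x y neq_xy eq_fxy / x < y.
  move=> wlog_lt; case: (ltngtP x y) => [||/val_inj eq_xy]; first exact: wlog_lt.
    by apply: wlog_lt; rewrite 1?eq_sym.
  by rewrite eq_xy eqxx in neq_xy.
exists (y - x).-1, x; rewrite -iter_op_mul prednK ?subn_gt0 // -iterD subnK //.
exact: ltnW.
Qed.

Lemma Red_ideal (x0 : T) : is_ideal op (Red op).
Proof.
split; first by apply/set0Pn; exists (op x0 x0); rewrite inE; apply/existsP;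
  exists x0; apply/existsP; exists x0.
split=> s x; rewrite !inE => /existsP [a /existsP [b /eqP <-]]; apply/existsP.
  by exists (op s a); apply/existsP; exists b; rewrite assoc.
by exists a; apply/existsP; exists (op b s); rewrite assoc.
Qed.

Hypothesis qright : forall a b al be, op al a = op be a -> op al b = op be b.

Lemma right_cancel_absorbed c e : op c e = e -> forall a b, op (op a c) b = op a b.
Proof. by move=> ce_e a b; apply: (qright (a := e)); rewrite -assoc ce_e. Qed.

Lemma Red_sub_ideal (J : {set T}) : is_ideal op J -> Red op \subset J.
Proof.
move=> idJ; have [/set0Pn [j jJ] [mulJ Jmul]] := idJ.
have [d [m cabs]] := power_absorbs_power j.
apply/subsetP => s; rewrite inE => /existsP [a /existsP [b /eqP <-]].
rewrite -(right_cancel_absorbed cabs) -assoc.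
by apply: mulJ; apply: Jmul; apply: iter_op_in_ideal.
Qed.

End FiniteSemigroup.

Theorem lemma3 (T : finType) (op : T -> T -> T) (x0 : T)
  (assoc : associative_op op)
  (qleft : forall a b al be, op a al = op a be -> op b al = op b be)
  (qright : forall a b al be, op al a = op be a -> op al b = op be b) :
  is_kernel op (Red op) /\ (forall K, is_kernel op K -> K = Red op).
Proof.
apply: least_ideal_is_kernel; first exact: Red_ideal assoc x0.
exact: Red_sub_ideal assoc qright.
Qed.
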